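(* Let $d\ge2$. Every $\sigma_d$-rotational set $A\subset\mathbb{T}$ is a union of at most $d-1$ distinct $\sigma_d$-orbits.
   Context: $\mathbb{T}=\mathbb{R}/\mathbb{Z}$, ordered by representatives in $[0,1)$; $\sigma_d(t)=dt$. A finite set $A=\{t_0<\dots<t_{N-1}\}\subset\mathbb{T}$ (indices in $\mathbb{Z}/N\mathbb{Z}$) is $\sigma_d$-rotational if for some fixed $0\ne P\in\mathbb{Z}/N\mathbb{Z}$, $\sigma_d(t_i)=t_{i+P}$ for all $i$. *)

From HB Require Import structures.
From mathcomp Require Import all_boot all_order all_algebra.
From mathcomp Require Import reals.
Set Implicit Arguments. Unset Strict Implicit. Unset Printing Implicit Defensive.
Import Order.TTheory GRing.Theory Num.Theory.
Local Open Scope ring_scope.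

(* The circle T = R/Z is represented by the representatives in [0,1). *)
Definition frac {R : realType} (x : R) : R := x - (Num.floor x)%:~R.

Definition sigma {R : realType} (d : nat) (t : R) : R := frac (d%:R * t).

(* A finite subset A of T, given as its increasing enumeration
   s = [t_0 < ... < t_{N-1}] of representatives in [0,1). *)
Definition circle_enum {R : realType} (s : seq R) : Prop :=
  sorted <%R s /\ all (fun t => (0 <= t) && (t < 1)) s.

Definition rotational {R : realType} (d : nat) (s : seq R) : Prop :=
  exists P : nat, (P %% size s != 0)%N /\
    forall i : nat, (i < size s)%N ->
      sigma d (nth 0 s i) = nth 0 s ((i + P) %% size s).

Definition in_sigma_orbit {R : realType} (d : nat) (x y : R) : Prop :=
  exists n : nat, y = iter n (sigma d) x.

From Pilot Require Import Defs.
From HB Require Import structures.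
From mathcomp Require Import all_boot all_order all_algebra.
From mathcomp Require Import reals.
From mathcomp Require Import ring lra zify.
Set Implicit Arguments. Unset Strict Implicit. Unset Printing Implicit Defensive.
Import Order.TTheory GRing.Theory Num.Theory.
Local Open Scope ring_scope.

(* Write A = {t_0 < ... < t_(N-1)} and let l_i be the length of the arc
   from t_i to t_(i+1) (cyclically), so that the l_i sum to 1.  Since
   sigma_d maps t_i to t_(i+P) and t_(i+1) to t_(i+P+1), it wraps the arc
   l_i around the circle an integral number k_i >= 0 of times:
   d l_i = l_(i+P) + k_i.  Summing over i gives sum k_i = d - 1, and
   summing over one orbit of i |-> i+P gives (d - 1) * (positive) > 0, so
   each orbit contains an index with k_i >= 1.  Hence there are at most
   d - 1 orbits. *)

Lemma sum_nat_succ_periodic (V : nmodType) (h : nat -> V) (N : nat) :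
  h N = h 0%N -> \sum_(0 <= m < N) h m.+1 = \sum_(0 <= m < N) h m.
Proof.
case: N => [|n] hN; first by rewrite !big_geq.
by rewrite big_nat_recr //= big_nat_recl //= hN addrC.
Qed.

Lemma sum_nat_shift_mod (V : nmodType) (f : nat -> V) (N Q : nat) :
  (0 < N)%N -> \sum_(0 <= i < N) f ((i + Q) %% N)%N = \sum_(0 <= i < N) f i.
Proof.
move=> N_gt0; elim: Q => [|Q IH].
  by apply: eq_big_nat => i /andP[_ iN]; rewrite addn0 modn_small.
rewrite -IH -(@sum_nat_succ_periodic _ (fun i => f ((i + Q) %% N)%N)).
  by apply: eq_big_nat => i _; rewrite addnS -addSn.
by rewrite /= modnDl.
Qed.

Section RotationOrbits.

Variables (N P : nat).
Hypothesis N_gt0 : (0 < N)%N.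

Definition rot_reach (a b : nat) : bool :=
  has (fun m => b == (a + m * P) %% N)%N (iota 0 N).

Lemma rot_reachP a b :
  reflect (exists n, b = (a + n * P) %% N)%N (rot_reach a b).
Proof.
apply: (iffP hasP) => [[m _ /eqP ->]|[n ->]]; first by exists m.
exists (n %% N)%N; first by rewrite mem_iota add0n ltn_pmod.
by apply/eqP; rewrite [in LHS](divn_eq n N) mulnDl mulnAC addnCA modnMDl.
Qed.

Lemma rot_reach_trans a b c : rot_reach a b -> rot_reach b c -> rot_reach a c.
Proof.
move=> /rot_reachP[n1 ->] /rot_reachP[n2 ->]; apply/rot_reachP.
by exists (n1 + n2)%N; rewrite modnDml mulnDl addnA.
Qed.

(* (N - 1) n further steps make N n steps in total, a multiple of N. *)
Lemma rot_reach_sym a b : (a < N)%N -> rot_reach a b -> rot_reach b a.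
Proof.
move=> aN /rot_reachP[n ->]; apply/rot_reachP; exists (N.-1 * n)%N.
rewrite modnDml; have -> : (a + n * P + N.-1 * n * P = n * P * N + a)%N.
  by have := prednK N_gt0; move: (N.-1) => M <-; nia.
by rewrite modnMDl modn_small.
Qed.

Definition orbit_reps (pos : pred nat) : seq nat :=
  [seq i <- iota 0 N | pos i && all (fun j => ~~ (pos j && rot_reach j i)) (iota 0 i)].

Variable pos : pred nat.

Lemma orbit_reps_uniq : uniq (orbit_reps pos).
Proof. by rewrite filter_uniq // iota_uniq. Qed.

Lemma mem_orbit_reps i : i \in orbit_reps pos -> (i < N)%N.
Proof. by rewrite mem_filter mem_iota => /andP[_ /andP[]]. Qed.

Lemma size_orbit_reps : (size (orbit_reps pos) <= count pos (iota 0 N))%N.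
Proof. by rewrite size_filter; apply: sub_count => i /andP[]. Qed.

Lemma orbit_reps_cover j :
  (exists i, [&& i < N, pos i & rot_reach i j])%N ->
  exists2 i, i \in orbit_reps pos & rot_reach i j.
Proof.
move=> ex_i; case: (ex_minnP ex_i) => i /and3P[iN pi rij] min_i.
exists i => //; rewrite mem_filter mem_iota add0n iN pi leq0n !andbT.
apply/allP => k; rewrite mem_iota add0n => /andP[_ ki]; apply/negP => /andP[pk rki].
have : (i <= k)%N by apply: min_i; rewrite (ltn_trans ki iN) pk (rot_reach_trans rki rij).
by rewrite leqNgt ki.
Qed.

Lemma orbit_reps_apart a b :
  a \in orbit_reps pos -> b \in orbit_reps pos -> rot_reach a b -> a = b.
Proof.
move=> ra rb rab; have rba := rot_reach_sym (mem_orbit_reps ra) rab.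
have minimal c e : c \in orbit_reps pos -> e \in orbit_reps pos ->
    rot_reach e c -> (c <= e)%N.
  rewrite !mem_filter => /andP[/andP[_ /allP min_c] _] /andP[/andP[pe _] _] rec.
  by rewrite leqNgt; apply: contraT => /negbNE ec; have := min_c e;
     rewrite mem_iota ec pe rec => /(_ isT).
by apply/eqP; rewrite eqn_leq (minimal _ _ ra rb rba) (minimal _ _ rb ra rab).
Qed.

End RotationOrbits.

Section ArcLengths.

Variables (R : realType) (d : nat) (s : seq R) (P : nat).
Hypothesis d_ge2 : (2 <= d)%N.
Hypothesis s_enum : circle_enum s.
Hypothesis s_rot : forall i, (i < size s)%N ->
  sigma d (nth 0 s i) = nth 0 s ((i + P) %% size s).
Hypothesis size_gt0 : (0 < size s)%N.

Local Notation N := (size s).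
Local Notation t i := (nth 0 s i).

(* The last arc, from t_(N-1) to t_0, wraps through 0. *)
Definition arc (i : nat) : R := t (i.+1 %% N) - t i + (i.+1 == N)%:R.

(* The number k_i of extra times sigma_d wraps the i-th arc around the circle. *)
Definition excess (i : nat) : R := d%:R * arc i - arc ((i + P) %% N).

Lemma nth_circle_range i : (i < N)%N -> 0 <= t i < 1.
Proof. by move=> iN; case: s_enum => _ /all_nthP; apply. Qed.

Lemma arc_gt0 i : (i < N)%N -> 0 < arc i.
Proof.
move=> iN; rewrite /arc; have [iN1|] := ltnP i.+1 N.
  rewrite modn_small // (ltn_eqF iN1) addr0 subr_gt0.
  by rewrite (lt_sorted_ltn_nth 0 s_enum.1).
move=> Ni; have -> : i.+1 = N by apply/eqP; rewrite eqn_leq Ni iN.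
have /andP[_ ti_lt1] := nth_circle_range iN.
have /andP[t0_ge0 _] := nth_circle_range size_gt0; rewrite modnn eqxx mulr1n; lra.
Qed.

Lemma arc_le1 i : (i < N)%N -> arc i <= 1.
Proof.
move=> iN; rewrite /arc; have [iN1|] := ltnP i.+1 N.
  have /andP[ti_ge0 _] := nth_circle_range iN.
  have /andP[_ ti1_lt1] := nth_circle_range iN1.
  by rewrite modn_small // (ltn_eqF iN1) addr0; lra.
move=> Ni; have -> : i.+1 = N by apply/eqP; rewrite eqn_leq Ni iN.
rewrite modnn eqxx mulr1n; have : t 0 <= t i by rewrite (lt_sorted_leq_nth 0 s_enum.1).
lra.
Qed.

Lemma sum_arc : \sum_(0 <= i < N) arc i = 1.
Proof.
rewrite /arc big_split sumrB /=.
rewrite (eq_big_nat _ _ (F2 := fun i => t ((i + 1) %% N)%N)); last first.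
  by move=> i _; rewrite addn1.
rewrite sum_nat_shift_mod // subrr add0r.
case: N size_gt0 => [|n] // _; rewrite big_nat_recr //= eqxx big1_seq ?add0r //.
by move=> i /andP[_]; rewrite mem_index_iota eqSS => /andP[_ /ltn_eqF ->].
Qed.

Lemma sum_excess : \sum_(0 <= i < N) excess i = (d - 1)%:R.
Proof.
rewrite /excess sumrB -mulr_sumr sum_nat_shift_mod // sum_arc mulr1.
by rewrite natrB // ltnW.
Qed.

(* Both ends of the arc are mapped by t |-> d t - floor (d t), so the
   difference d l_i - l_(i+P) is a difference of floors (plus wrap terms). *)
Lemma excess_int i : (i < N)%N -> exists z : int, excess i = z%:~R.
Proof.
move=> iN; set j := (i.+1 %% N)%N; have jN : (j < N)%N by rewrite ltn_pmod.
have nxt : ((j + P) %% N = ((i + P) %% N).+1 %% N)%N.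
  by rewrite /j -(addn1 i) -(addn1 ((i + P) %% N)) !modnDml addnAC.
exists (Num.floor (d%:R * t j) - Num.floor (d%:R * t i)
        + (d * (i.+1 == N))%N%:Z - (((i + P) %% N).+1 == N)%N%:Z).
rewrite /excess /arc -/j -nxt -(s_rot jN) -(s_rot iN) /sigma /Defs.frac.
by rewrite !intrD !intrN -!pmulrn natrM; ring.
Qed.

Lemma excess_nat i : (i < N)%N -> exists k : nat, excess i = k%:R.
Proof.
move=> iN; have [z ez] := excess_int iN.
have : -1 < excess i.
  have := arc_le1 (ltn_pmod (i + P) size_gt0); have := arc_gt0 iN.
  have : 2%:R <= d%:R :> R by rewrite ler_nat.
  rewrite /excess; nra.
rewrite ez -(@intrN R 1) ltr_int => z_ge0.
by exists `|z|%N; rewrite natr_absz ger0_norm //; lia.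
Qed.

Lemma count_excess_gt0 : (count (fun i => 0 < excess i)%R (iota 0 N) <= d - 1)%N.
Proof.
rewrite -(ler_nat R) -sum_excess -sum1_count natr_sum big_mkcond /index_iota subn0.
rewrite big_seq [X in _ <= X]big_seq; apply: ler_sum => i.
rewrite mem_iota add0n => /andP[_ iN].
by have [[|k] ->] := excess_nat iN; rewrite ?ltxx // ltr0Sn ler1n.
Qed.

Lemma sum_excess_orbit j :
  \sum_(0 <= m < N) excess ((j + m * P) %% N)
    = (d%:R - 1) * \sum_(0 <= m < N) arc ((j + m * P) %% N).
Proof.
rewrite /excess sumrB -mulr_sumr mulrBl mul1r; congr (_ - _).
rewrite -(@sum_nat_succ_periodic _ (fun m => arc ((j + m * P) %% N))); last first.
  by rewrite mul0n addn0 mulnC addnC modnMDl.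
by apply: eq_big_nat => m _; rewrite modnDml mulSnr addnA.
Qed.

Lemma orbit_has_excess j : (j < N)%N ->
  exists i, [&& (i < N)%N, 0 < excess i & rot_reach N P i j].
Proof.
move=> jN; pose c m := ((j + m * P) %% N)%N.
have cN m : (c m < N)%N by rewrite ltn_pmod.
have orbit_arc_gt0 : 0 < \sum_(0 <= m < N) arc (c m).
  case: N size_gt0 => [|n] // _; rewrite big_nat_recl //.
  by apply: ltr_wpDr; [apply: sumr_ge0 => m _; apply/ltW/arc_gt0 | apply: arc_gt0].
have : has (fun m => 0 < excess (c m)) (iota 0 N).
  apply: contraT => /hasPn no_excess.
  have : \sum_(0 <= m < N) excess (c m) <= 0.
    rewrite big_seq; apply: sumr_le0 => m; rewrite /index_iota subn0 => mN.
    by rewrite leNgt no_excess.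
  have d_gt1 : 0 < d%:R - 1 :> R by rewrite subr_gt0 ltr1n.
  by rewrite sum_excess_orbit leNgt (mulr_gt0 d_gt1 orbit_arc_gt0).
case/hasP => m _ excess_gt0; exists (c m); rewrite cN excess_gt0 /=.
by apply: rot_reach_sym => //; apply/(rot_reachP _ size_gt0); exists m.
Qed.

Lemma iter_sigma_nth n a : (a < N)%N ->
  iter n (sigma d) (t a) = t ((a + n * P) %% N).
Proof.
elim: n a => [|n IH] a aN /=; first by rewrite addn0 modn_small.
by rewrite IH // s_rot ?ltn_pmod // modnDml mulSnr addnA.
Qed.

Lemma sigma_orbit_nth_mem a y : (a < N)%N -> in_sigma_orbit d (t a) y -> y \in s.
Proof. by move=> aN [n ->]; rewrite iter_sigma_nth // mem_nth ?ltn_pmod. Qed.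

Lemma sigma_orbit_nthP a b : (a < N)%N -> (b < N)%N ->
  in_sigma_orbit d (t a) (t b) <-> rot_reach N P a b.
Proof.
move=> aN bN; split=> [[n]|/(rot_reachP _ size_gt0)[n ->]]; last first.
  by exists n; rewrite iter_sigma_nth.
rewrite iter_sigma_nth // => /eqP.
rewrite nth_uniq ?ltn_pmod ?(lt_sorted_uniq s_enum.1) //.
by move=> /eqP ->; apply/(rot_reachP _ size_gt0); exists n.
Qed.

End ArcLengths.

Theorem corollary3p5 (R : realType) (d : nat) (s : seq R) :
  (2 <= d)%N -> circle_enum s -> rotational d s ->
  exists xs : seq R,
    (size xs <= d - 1)%N /\
    (forall y : R, y \in s <-> exists2 x : R, (x \in xs) & (in_sigma_orbit d x y)) /\
    (forall i j : nat, (i < size xs)%N -> (j < size xs)%N -> i <> j ->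
       ~ in_sigma_orbit d (nth 0 xs i) (nth 0 xs j)).
Proof.
(* The rotation number P need not be nonzero for this bound. *)
move=> d_ge2 s_enum [P [_ s_rot]].
have [/size0nil -> | N_gt0] := posnP (size s).
  by exists [::]; split=> //; split=> // y; split=> // -[].
pose reps := orbit_reps (size s) P (fun i => 0 < excess d s P i).
have reps_lt i : i \in reps -> (i < size s)%N by apply: mem_orbit_reps.
exists (map (nth 0 s) reps); split; [|split].
- rewrite size_map; apply: leq_trans (size_orbit_reps _ _ _) _.
  exact: count_excess_gt0.
- move=> y; split=> [ys|[_ /mapP[i /reps_lt iN ->]]]; last first.
    exact: (sigma_orbit_nth_mem s_rot N_gt0 iN).
  have yN : (index y s < size s)%N by rewrite index_mem.
  have := orbit_has_excess P d_ge2 s_enum N_gt0 yN.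
  case/(orbit_reps_cover N_gt0) => i ri rij; exists (nth 0 s i); first exact: map_f.
  rewrite -(nth_index 0 ys).
  exact/(sigma_orbit_nthP s_enum s_rot N_gt0 (reps_lt _ ri) yN).
- move=> i j; rewrite size_map => il jl ij; rewrite !(nth_map 0%N) //.
  have [ri rj] := (mem_nth 0%N il, mem_nth 0%N jl).
  move/(sigma_orbit_nthP s_enum s_rot N_gt0 (reps_lt _ ri) (reps_lt _ rj)).
  move/(orbit_reps_apart N_gt0 ri rj)/eqP.
  by rewrite nth_uniq ?orbit_reps_uniq // => /eqP.
Qed.
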